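(* Let $X$ be a $T_1$ topological space. The following are equivalent: (i) $X$ is an $F_cP$-space, i.e. $C_c(X)_F$ is von Neumann regular; (ii) for every $Z\in Z[C_c(X)_F]$ there exists a finite $F\subseteq X$ such that $Z\setminus F$ is clopen in the subspace $X\setminus F$; (iii) $C_c(X)_F$ is a PP-ring, i.e. the annihilator of every element is generated by an idempotent.
   Context: $C_c(X)_F$ denotes the set of all functions $f:X\to\mathbb{R}$ whose range is countable and whose set of points of discontinuity is finite; it is a commutative ring with unity under pointwise operations. $Z(f)=\{x:f(x)=0\}$, $Z[C_c(X)_F]=\{Z(f):f\in C_c(X)_F\}$. A commutative ring $R$ is von Neumann regular if for every $a\in R$ there is $r\in R$ with $a=a^2r$. $\mathrm{Ann}(f)=\{g: gf=0\}$. *)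

From HB Require Import structures.
From mathcomp Require Import all_boot all_order all_algebra.
From mathcomp Require Import all_classical all_reals all_analysis.
Set Implicit Arguments. Unset Strict Implicit. Unset Printing Implicit Defensive.
Import Order.TTheory GRing.Theory Num.Theory.
Import numFieldNormedType.Exports.
Local Open Scope classical_set_scope.
Local Open Scope ring_scope.

Definition CcF {X : topologicalType} {R : realType} : set (X -> R) :=
  [set f : X -> R | countable (range f) /\
           finite_set [set x : X | ~ {for x, continuous f}]].

Definition zeroset {X : Type} {R : realType} (f : X -> R) : set X :=
  [set x | f x = 0].

Definition AnnCcF {X : topologicalType} {R : realType} (f : X -> R)
  : set (X -> R) :=
  [set g | CcF g /\ (fun x => g x * f x) = (fun=> 0)].

Definition CcF_vN_regular (X : topologicalType) (R : realType) : Prop :=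
  forall a : X -> R, CcF a ->
    exists r : X -> R, CcF r /\ a = (fun x => a x ^+ 2 * r x).

Definition CcF_PP (X : topologicalType) (R : realType) : Prop :=
  forall f : X -> R, CcF f ->
    exists e : X -> R, [/\ CcF e, (fun x => e x * e x) = e &
      AnnCcF f = [set (fun x => g x * e x) | g in (@CcF X R)]].

(* A `\` F is clopen in the subspace X `\` F (subspace topology written
   out: relatively open and relatively closed). *)
Definition rel_clopen {X : topologicalType} (S A : set X) : Prop :=
  (exists U : set X, open U /\ S = U `&` A) /\
  (exists C : set X, closed C /\ S = C `&` A).

From HB Require Import structures.
From mathcomp Require Import all_boot all_order all_algebra.
From mathcomp Require Import all_classical all_reals all_analysis.
Import Order.TTheory GRing.Theory Num.Theory.
Import numFieldNormedType.Exports.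
Local Open Scope classical_set_scope.
Local Open Scope ring_scope.
Set Implicit Arguments.
Unset Strict Implicit.

(* (ii) -> (i): outside the finite set F the zero set of a is open, so the
   pointwise inverse of a (equal to 0 on Z(a)) is continuous wherever a is,
   except possibly on F; it is a relative inverse of a.
   (i) -> (iii): if a = a^2 r then e = 1 - a r is an idempotent generating
   Ann(a).
   (iii) -> (ii): the idempotent generator e of Ann(f) is 0/1-valued, and
   testing against the indicators of points (continuous off one point, as X is
   T1) shows e = 1 exactly on Z(f).  An idempotent is locally constant at its
   points of continuity, so Z(f) is clopen off the finite set of
   discontinuities of e. *)

Lemma countable_range_map2 (T U V W : Type) (h : U -> V -> W)
    (f : T -> U) (g : T -> V) :
  countable (range f) -> countable (range g) ->
  countable (range (fun x => h (f x) (g x))).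
Proof.
move=> cf cg; apply: (sub_countable _ (countableX cf cg)).
have sub : range (fun x => h (f x) (g x)) `<=`
    [set (fun p : U * V => h p.1 p.2) p | p in range f `*` range g].
  by move=> _ [x _ <-]; exists (f x, g x) => //; split; exists x.
exact: card_le_trans (subset_card_le sub) (card_image_le _ _).
Qed.

Lemma idempotent_values (R : idomainType) (a : R) : a * a = a -> a = 0 \/ a = 1.
Proof.
move=> aa; have [->|a0] := eqVneq a 0; [by left | right].
by apply: (mulfI a0); rewrite aa mulr1.
Qed.

Section CcF_ring.
Context (R : realType) (X : topologicalType).

Definition clopen_off_finite (f : X -> R) : Prop :=
  exists F : set X, finite_set F /\ rel_clopen (zeroset f `\` F) (~` F).

Lemma CcF_map2 (h : R -> R -> R) (f g : X -> R) :
  (forall x : X, {for x, continuous f} -> {for x, continuous g} ->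
     {for x, continuous (fun y => h (f y) (g y))}) ->
  CcF f -> CcF g -> CcF (fun x => h (f x) (g x)).
Proof.
move=> hcont [cf ff] [cg fg]; split; first exact: countable_range_map2.
apply: (@sub_finite_set _ _ ([set x | ~ {for x, continuous f}] `|`
                             [set x | ~ {for x, continuous g}])).
  move=> x /= ncx; apply: contrapT => /not_orP[/contrapT cfx /contrapT cgx].
  exact/ncx/hcont.
by rewrite finite_setU.
Qed.

Lemma CcF_mul (f g : X -> R) : CcF f -> CcF g -> CcF (fun x => f x * g x).
Proof. by apply: (@CcF_map2 *%R) => x cf cg; apply: cvgM. Qed.

Lemma CcF_sub (f g : X -> R) : CcF f -> CcF g -> CcF (fun x => f x - g x).
Proof. by apply: (@CcF_map2 (fun a b => a - b)) => x cf cg; apply: cvgB. Qed.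

Lemma CcF_cst (c : R) : CcF (fun _ : X => c).
Proof.
split.
  apply/finite_set_countable/(@sub_finite_set _ _ [set c]) => //.
  by move=> _ [x _ <-].
apply: (@sub_finite_set _ _ set0) => // x /= ncx.
by apply: ncx; apply: cvg_cst.
Qed.

Lemma CcF_indic1 : accessible_space X -> forall x : X, CcF (\1_[set x] : X -> R).
Proof.
move=> hT1 x; split.
  apply/finite_set_countable.
  exact: sub_finite_set (@image_indic_sub X R _ _) (finite_set2 _ _).
apply: (@sub_finite_set _ _ [set x]) => // y /= ncy.
apply: contrapT => yx; apply: ncy; apply: cvg_near_cst.
have : nbhs y (~` [set x]).
  by apply: open_nbhs_nbhs; split => //; exact/closed_openC/accessible_closed_set1.
by apply: filterS => z zx; rewrite !indicE !memNset.
Qed.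

Lemma rel_clopen_of_locally_constant (S F : set X) :
  (forall x, ~ F x -> \forall y \near x, S y = S x) ->
  rel_clopen (S `\` F) (~` F).
Proof.
move=> Sloc; split.
  exists S°; split; first exact: open_interior.
  apply/seteqP; split => y [Sy nFy]; split => //; last exact: nbhs_singleton.
  by apply: filterS (Sloc y nFy) => z /= ->.
exists (~` (~` S)°); split; first exact/open_closedC/open_interior.
apply/seteqP; split => y [Sy nFy]; split => //.
  by move=> /nbhs_singleton; apply.
apply: contrapT => nSy; apply: Sy.
by apply: filterS (Sloc y nFy) => z /= ->.
Qed.

Lemma CcF_inv (a : X -> R) : accessible_space X ->
  CcF a -> clopen_off_finite a -> CcF (fun x => (a x)^-1).
Proof.
move=> hT1 [ca fa] [F [fF [[U [oU ZU]] _]]]; split.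
  exact: (countable_range_map2 (fun u _ => u^-1) ca ca).
apply: (@sub_finite_set _ _ ([set x | ~ {for x, continuous a}] `|` F)); last first.
  by rewrite finite_setU.
move=> x /= ncx; apply: contrapT => /not_orP[/contrapT cax nFx]; apply: ncx.
have [ax0|ax0] := eqVneq (a x) 0; last exact: cvgV.
have UFx : nbhs x (U `&` ~` F).
  apply: open_nbhs_nbhs; split; last by rewrite -ZU.
  by apply: openI => //; apply: closed_openC; exact: accessible_finite_set_closed.1 hT1 _ fF.
apply: cvg_near_cst; apply: filterS UFx => y; rewrite -ZU => -[/= ->].
by rewrite ax0 invr0.
Qed.

Lemma vN_regular_of_clopen_off_finite : accessible_space X ->
  (forall f : X -> R, CcF f -> clopen_off_finite f) -> CcF_vN_regular X R.
Proof.
move=> hT1 clopen a Ca; exists (fun x => (a x)^-1).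
split; first exact: CcF_inv (clopen a Ca).
apply/funext => x; have [ax0|ax0] := eqVneq (a x) 0.
  by rewrite ax0 expr2 !mul0r.
by rewrite expr2 mulfK.
Qed.

Lemma PP_of_vN_regular : CcF_vN_regular X R -> CcF_PP X R.
Proof.
move=> vNr f Cf; have [r [Cr Efr]] := vNr f Cf.
have frE x : f x * r x * f x = f x by rewrite mulrAC -expr2 {2}Efr.
exists (fun x => 1 - f x * r x); split.
- exact/CcF_sub/CcF_mul/Cr/Cf/CcF_cst.
- apply/funext => x.
  by rewrite mulrBl mul1r mulrBr mulr1 mulrA frE subrr subr0.
- apply/seteqP; split.
    move=> g [Cg gf0]; exists g => //.
    apply/funext => x; have /= gf := congr1 (fun h => h x) gf0.
    by rewrite mulrBr mulr1 mulrA gf mul0r subr0.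
  move=> _ [g Cg <-]; split; first exact/CcF_mul/CcF_sub/CcF_mul/Cr/Cf/CcF_cst.
  by apply/funext => x; rewrite -mulrA mulrBl mul1r frE subrr mulr0.
Qed.

Lemma idempotent_locally_constant (e : X -> R) x :
  (forall y, e y * e y = e y) -> {for x, continuous e} ->
  \forall y \near x, e y = e x.
Proof.
move=> ee cex.
(* As [e] is {0, 1}-valued, [e y - (1 - e x)] vanishes iff [e y <> e x]. *)
have cvgB1 : (fun y => e y - (1 - e x)) @ x --> e x - (1 - e x).
  by apply: cvgB => //; exact: cvg_cst.
have : e x - (1 - e x) != 0.
  by case: (idempotent_values (ee x)) => ->; rewrite !(subr0, subrr, sub0r, oppr_eq0, oner_eq0).
move=> /(cvgr_neq0 _ cvgB1); apply: filterS => y.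
by case: (idempotent_values (ee y)) => ->; case: (idempotent_values (ee x)) => ->;
  rewrite !(subr0, subrr, sub0r, oppr_eq0, oner_eq0, eqxx).
Qed.

Lemma PP_generator_zeroset (f e : X -> R) : accessible_space X ->
  (fun x => e x * e x) = e ->
  AnnCcF f = [set (fun x => g x * e x) | g in (@CcF X R)] ->
  forall x, f x = 0 <-> e x = 1.
Proof.
move=> hT1 ee Ann x; have eex y : e y * e y = e y by rewrite -[in RHS]ee.
split => [fx0|ex1].
  have : AnnCcF f \1_[set x].
    split; first exact: CcF_indic1.
    apply/funext => y; rewrite indicE; case: (boolP (y \in [set x])).
      by move=> /set_mem ->; rewrite fx0 mulr0.
    by rewrite mul0r.
  rewrite Ann => -[g _ /(congr1 (fun h => h x))]; rewrite /= indicE mem_set //.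
  case: (idempotent_values (eex x)) => // ->.
  by rewrite mulr0 => /esym/eqP; rewrite oner_eq0.
have : AnnCcF f e.
  by rewrite Ann; exists (fun=> 1); [exact: CcF_cst | apply/funext => y; rewrite mul1r].
by move=> [_ /(congr1 (fun h => h x))]; rewrite /= ex1 mul1r.
Qed.

Lemma clopen_off_finite_of_PP : accessible_space X ->
  CcF_PP X R -> forall f : X -> R, CcF f -> clopen_off_finite f.
Proof.
move=> hT1 PP f Cf; have [e [[_ fe] ee Ann]] := PP f Cf.
have eex y : e y * e y = e y by rewrite -[in RHS]ee.
rewrite /clopen_off_finite; have -> : zeroset f = [set x | e x = 1].
  by apply/funext => x; apply/propext; exact: PP_generator_zeroset.
exists [set x | ~ {for x, continuous e}]; split => //.
apply: rel_clopen_of_locally_constant => x /contrapT cex.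
by apply: filterS (idempotent_locally_constant eex cex) => y /= ->.
Qed.

End CcF_ring.

Theorem theorem7p6 (R : realType) (X : topologicalType)
  (hT1 : @accessible_space X) :
  [/\ (CcF_vN_regular X R <->
       (forall f : X -> R, CcF f ->
          exists F : set X, finite_set F /\
            rel_clopen (zeroset f `\` F) (~` F))),
      ((forall f : X -> R, CcF f ->
          exists F : set X, finite_set F /\
            rel_clopen (zeroset f `\` F) (~` F)) <-> CcF_PP X R) &
      (CcF_PP X R <-> CcF_vN_regular X R)].
Proof.
have ii_i := @vN_regular_of_clopen_off_finite R X hT1.
have i_iii := @PP_of_vN_regular R X.
have iii_ii := @clopen_off_finite_of_PP R X hT1.
split; split => H.
- exact/iii_ii/i_iii.
- exact: ii_i.
- exact/i_iii/ii_i.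
- exact: iii_ii.
- exact/ii_i/iii_ii.
- exact: i_iii.
Qed.
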